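(* Consider the deterministic-demand dynamic repositioning problem (DRRP) described in the context, for a fixed realization $\xi$. Suppose it has an optimal solution. Then there always exists an optimal solution in which, for every node $i\in\mathcal{N}_\text{SV}\cap\mathcal{N}_\text{RV}$ and every time step $t$, the pair $(y_i^{+,t},y_i^{-,t})$ has the form $(y_i^{+,t},0)$ or $(0,y_i^{-,t})$. Moreover, if $r_i^t>0$ for all pairs $(i,t)$, then no optimal solution has $y_i^{+,t}>0$ and $y_i^{-,t}>0$ simultaneously for any $(i,t)$.
   Context: Data: a directed graph $\mathcal{G}_\text{SV}=(\mathcal{N}_\text{SV},\mathcal{E}_\text{SV})$ of possible shared-vehicle (SV) journeys; a directed graph $\mathcal{G}_\text{RV}=(\mathcal{N}_\text{RV},\mathcal{E}_\text{RV})$ of possible one-step rebalancing-vehicle (RV) movements; a finite set $\mathcal{V}$ of identical RVs, each able to carry an integer number $\overline{b}$ of SVs; horizon $T$; maximum journey duration $K$; integer station capacities $\overline{d}_i$; an integer bound $\overline{y}$; costs $c_{i,j}^t\in\mathbb{R}$ and $r_i^t\ge 0$. For a realization $\xi$, demands $f_{i,j}^{t,k}(\xi)\in\mathbb{N}$ and loss functions $l_{i,j}^{t,k}(\cdot;\xi)$, each a convex piecewise affine function through the origin with breakpoints at integers. Variables $y_i^{\pm,t}$ are indexed by $i\in\mathcal{N}_\text{SV}\cap\mathcal{N}_\text{RV}$ (and are taken to be $0$ where not defined). The DRRP is: minimize over $z,y,b,w,d$ $$\sum_{t=1}^T\Big[\sum_{(i,j)\in\mathcal{E}_\text{SV}}\sum_{k=0}^K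 l_{i,j}^{t,k}(f_{i,j}^{t,k}(\xi)-w_{i,j}^{t,k};\xi)+\sum_{(i,j)\in\mathcal{E}_\text{RV}}c_{i,j}^tz_{i,j}^t+\sum_{i\in\mathcal{N}_\text{SV}\cap\mathcal{N}_\text{RV}}r_i^t(y_i^{+,t}+y_i^{-,t})\Big]$$ subject to: (a) $d_i^t=d_i^{t-1}+\sum_{k=0}^K\big(\sum_{(j,i)\in\mathcal{E}_\text{SV}}w_{j,i}^{t-k,k}-\sum_{(i,j)\in\mathcal{E}_\text{SV}}w_{i,j}^{t,k}\big)+y_i^{-,t}-y_i^{+,t}$ for $t=1,\dots,T$, $i\in\mathcal{N}_\text{SV}$; (b) $\sum_{(i,j)\in\mathcal{E}_\text{RV}}b_{i,j}^t=\sum_{(j,i)\in\mathcal{E}_\text{RV}}b_{j,i}^{t-1}+y_i^{+,t}-y_i^{-,t}$ for $t=1,\dots,T$, $i\in\mathcal{N}_\text{RV}$; (c) $\sum_{(i,j)\in\mathcal{E}_\text{RV}}z_{i,j}^t=\sum_{(j,i)\in\mathcal{E}_\text{RV}}z_{j,i}^{t-1}$ for $t=1,\dots,T$, $i\in\mathcal{N}_\text{RV}$; (d) $0\le b_{i,j}^t\le\overline{b}z_{i,j}^t$ for $t=0,\dots,T$, $(i,j)\in\mathcal{E}_\text{RV}$, with integers $b_{i,j}^0$ given; (e) $0\le w_{i,j}^{t,k}\le f_{i,j}^{t,k}(\xi)$ for $t=1,\dots,T$, $k=0,\dots,K$, $(i,j)\in\mathcal{E}_\text{SV}$, with $w_{i,j}^{t,k}$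 given for $1-K\le t\le 0$, $-t<k\le K$; (f) $0\le d_i^t\le\overline{d}_i$ for $t=0,\dots,T$, with integers $d_i^0$ given; (g) $0\le y_i^{+,t}\le\overline{y}$, $0\le y_i^{-,t}\le\overline{y}$; (h) integers $z_{i,j}^0$ given with $\sum_{i,j}z_{i,j}^0=|\mathcal{V}|$; (i) all $w,y,b,z$ integer-valued. *)

From HB Require Import structures.
From mathcomp Require Import all_boot all_order all_algebra.
From mathcomp Require Import reals.
Set Implicit Arguments. Unset Strict Implicit. Unset Printing Implicit Defensive.
Import Order.TTheory GRing.Theory Num.Theory.
Local Open Scope ring_scope.

(* Nodes of both graphs live in a common finite type N;
   N_SV, N_RV are subsets, E_SV, E_RV sets of ordered pairs.
   Times t are natural numbers (0..T); journey start times of w are integers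
   (they may be in 1-K..0 for the given past journeys). *)
Record drrp_data (R : realType) (N : finType) := DRRP {
  NSV : {set N};
  NRV : {set N};
  ESV : {set (N * N)};
  ERV : {set (N * N)};
  nV : nat;
  bbar : int;                            (* capacity of an RV *)
  T : nat;                               (* horizon *)
  K : nat;                               (* max journey duration *)
  dbar : N -> int;                       (* station capacities *)
  ybar : int;
  c : N -> N -> nat -> R;
  r : N -> nat -> R;
  f : N -> N -> nat -> nat -> nat;
  l : N -> N -> nat -> nat -> R -> R;
  b0 : N -> N -> int;
  z0 : N -> N -> int;
  d0 : N -> int;
  w0 : N -> N -> int -> nat -> int
}.

Record drrp_sol (R : realType) (N : finType) := DSol {
  zv : N -> N -> nat -> int;
  bv : N -> N -> nat -> int;
  yp : N -> nat -> int;
  ym : N -> nat -> int;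
  wv : N -> N -> int -> nat -> int;
  dv : N -> nat -> R
}.

Definition convex_fun (R : realType) (g : R -> R) : Prop :=
  forall (x y lam : R), 0 <= lam -> lam <= 1 ->
    g (lam * x + (1 - lam) * y) <= lam * g x + (1 - lam) * g y.

Definition pwa_int_breaks (R : realType) (g : R -> R) : Prop :=
  forall n : int, exists a b : R, forall x : R,
    n%:~R <= x -> x <= (n + 1)%:~R -> g x = a * x + b.

Definition loss_fun (R : realType) (g : R -> R) : Prop :=
  [/\ convex_fun g, g 0 = 0 & pwa_int_breaks g].

Section DRRP.
Variables (R : realType) (N : finType) (P : drrp_data R N).

Definition drrp_wf : Prop :=
  [/\ (forall e, e \in ESV P -> e.1 \in NSV P /\ e.2 \in NSV P),
      (forall e, e \in ERV P -> e.1 \in NRV P /\ e.2 \in NRV P),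
      (forall i t, 0 <= r P i t),
      (forall e t k, e \in ESV P -> (1 <= t <= T P)%N -> (k <= K P)%N ->
          loss_fun (l P e.1 e.2 t k)) &
      \sum_(e in ERV P) z0 P e.1 e.2 = (nV P)%:Z ].

(* y variables are only defined on N_SV \cap N_RV; taken to be 0 elsewhere *)
Definition yP (s : drrp_sol R N) (i : N) (t : nat) : int :=
  if i \in NSV P :&: NRV P then yp s i t else 0.
Definition yM (s : drrp_sol R N) (i : N) (t : nat) : int :=
  if i \in NSV P :&: NRV P then ym s i t else 0.

Definition drrp_feasible (s : drrp_sol R N) : Prop :=
  (forall i t, i \in NSV P -> (1 <= t <= T P)%N ->
     dv s i t = dv s i t.-1 +
       (\sum_(k < (K P).+1)
          (\sum_(e in ESV P | e.2 == i) wv s e.1 i (t%:Z - k%:Z) k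
           - \sum_(e in ESV P | e.1 == i) wv s i e.2 t%:Z k)
        + yM s i t - yP s i t)%:~R) /\
  (forall i t, i \in NRV P -> (1 <= t <= T P)%N ->
     \sum_(e in ERV P | e.1 == i) bv s i e.2 t
     = \sum_(e in ERV P | e.2 == i) bv s e.1 i t.-1 + yP s i t - yM s i t) /\
  (forall i t, i \in NRV P -> (1 <= t <= T P)%N ->
     \sum_(e in ERV P | e.1 == i) zv s i e.2 t
     = \sum_(e in ERV P | e.2 == i) zv s e.1 i t.-1) /\
  (forall e t, e \in ERV P -> (t <= T P)%N ->
     0 <= bv s e.1 e.2 t <= bbar P * zv s e.1 e.2 t) /\
  (forall e, e \in ERV P -> bv s e.1 e.2 0 = b0 P e.1 e.2) /\
  (forall e t k, e \in ESV P -> (1 <= t <= T P)%N -> (k <= K P)%N ->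
     0 <= wv s e.1 e.2 t%:Z k <= (f P e.1 e.2 t k)%:Z) /\
  (forall e (t : int) k, e \in ESV P -> 1 - (K P)%:Z <= t <= 0 ->
     - t < k%:Z -> (k <= K P)%N -> wv s e.1 e.2 t k = w0 P e.1 e.2 t k) /\
  (forall i t, i \in NSV P -> (t <= T P)%N ->
     0 <= dv s i t <= (dbar P i)%:~R) /\
  (forall i, i \in NSV P -> dv s i 0 = (d0 P i)%:~R) /\
  (forall i t, i \in NSV P :&: NRV P -> (1 <= t <= T P)%N ->
     0 <= yp s i t <= ybar P /\ 0 <= ym s i t <= ybar P) /\
  (forall e, e \in ERV P -> zv s e.1 e.2 0 = z0 P e.1 e.2).
  (* (i) integrality of w, y, b, z holds by typing (int-valued) *)

Definition drrp_cost (s : drrp_sol R N) : R :=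
  \sum_(1 <= t < (T P).+1)
    ( \sum_(e in ESV P) \sum_(k < (K P).+1)
          l P e.1 e.2 t k
            (((f P e.1 e.2 t k)%:Z - wv s e.1 e.2 t%:Z k)%:~R)
    + \sum_(e in ERV P) c P e.1 e.2 t * (zv s e.1 e.2 t)%:~R
    + \sum_(i in NSV P :&: NRV P) r P i t * (yp s i t + ym s i t)%:~R ).

Definition drrp_optimal (s : drrp_sol R N) : Prop :=
  drrp_feasible s /\ forall s', drrp_feasible s' -> drrp_cost s <= drrp_cost s'.

End DRRP.

(** Moving [m = min (y^+, y^-)] vehicles in both directions at once changes
    none of the balance equations (a) and (b), which only see the net transfer
    [y^- - y^+], while it costs [2 r m >= 0]. Cancelling that common part
    therefore preserves feasibility and never increases the cost; when
    [r > 0] it strictly decreases the cost of any solution with [m > 0], which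
    then cannot be optimal. *)
From HB Require Import structures.
From mathcomp Require Import all_boot all_order all_algebra.
From mathcomp Require Import reals.
From mathcomp Require Import zify.
Set Implicit Arguments. Unset Strict Implicit. Unset Printing Implicit Defensive.
Import Order.TTheory GRing.Theory Num.Theory.
Local Open Scope ring_scope.

Lemma sumr_gt0_seq (R : numDomainType) (I : eqType) (r : seq I) (F : I -> R) j :
  (forall i, i \in r -> 0 <= F i) -> j \in r -> 0 < F j ->
  0 < \sum_(i <- r) F i.
Proof.
move=> F_ge0 jr Fj_gt0; rewrite (big_rem j) //=.
apply: ltr_pwDl Fj_gt0 _; rewrite big_seq; apply: sumr_ge0 => i /mem_rem.
exact: F_ge0.
Qed.

Section CancelTransfers.
Variables (R : realType) (N : finType) (P : drrp_data R N).

Definition transfer_overlap (s : drrp_sol R N) i t : int :=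
  Num.min (yp s i t) (ym s i t).

Definition cancel_transfers (s : drrp_sol R N) : drrp_sol R N :=
  DSol (zv s) (bv s)
    (fun i t => yp s i t - transfer_overlap s i t)
    (fun i t => ym s i t - transfer_overlap s i t) (wv s) (dv s).

Lemma cancel_transfers_exclusive s i t :
  yp (cancel_transfers s) i t = 0 \/ ym (cancel_transfers s) i t = 0.
Proof. rewrite /= /transfer_overlap; lia. Qed.

Lemma cancel_transfers_net s i t :
  yM P (cancel_transfers s) i t - yP P (cancel_transfers s) i t
  = yM P s i t - yP P s i t.
Proof. rewrite /yM /yP /=; case: ifP => _ //; lia. Qed.

Lemma feasible_cancel_transfers s :
  drrp_feasible P s -> drrp_feasible P (cancel_transfers s).
Proof.
move=> [Ha [Hb [Hc [Hd [Hd0 [He [He0 [Hf [Hf0 [Hg Hh]]]]]]]]]].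
split; [|split; [|do 8 (split=> //)]] => /=.
- move=> i t Hi Ht; rewrite Ha //; congr (_ + _%:~R).
  by rewrite -!addrA -cancel_transfers_net.
- move=> i t Hi Ht; rewrite Hb // -!addrA; congr (_ + _).
  by apply: oppr_inj; rewrite !opprB cancel_transfers_net.
- move=> i t Hi Ht; have [yp_b ym_b] := Hg i t Hi Ht.
  rewrite /transfer_overlap; split; lia.
Qed.

Lemma transfer_overlap_ge0 s i t : drrp_feasible P s ->
  i \in NSV P :&: NRV P -> (1 <= t <= T P)%N -> 0 <= transfer_overlap s i t.
Proof.
case=> [_ [_ [_ [_ [_ [_ [_ [_ [_ [Hg _]]]]]]]]]] Hi Ht.
have [yp_b ym_b] := Hg i t Hi Ht; rewrite /transfer_overlap; lia.
Qed.

Definition cancellation_saving (s : drrp_sol R N) : R :=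
  \sum_(1 <= t < (T P).+1) \sum_(i in NSV P :&: NRV P)
     r P i t * (transfer_overlap s i t *+ 2)%:~R.

Lemma cost_cancel_transfers s :
  drrp_cost P s = drrp_cost P (cancel_transfers s) + cancellation_saving s.
Proof.
apply/eqP; rewrite addrC -subr_eq; apply/eqP.
rewrite /drrp_cost -sumrB; apply: eq_bigr => t _ /=.
rewrite opprD addrACA subrr add0r -sumrB.
by apply: eq_bigr => i _; rewrite -mulrBr -rmorphB /=; congr (_ * _%:~R); lia.
Qed.

Hypothesis r_ge0 : forall i t, 0 <= r P i t.

Lemma cancellation_saving_term_ge0 s i t : drrp_feasible P s ->
  i \in NSV P :&: NRV P -> (1 <= t <= T P)%N ->
  0 <= r P i t * (transfer_overlap s i t *+ 2)%:~R.
Proof.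
by move=> feas Hi Ht; rewrite mulr_ge0 // ler0z mulrn_wge0 // transfer_overlap_ge0.
Qed.

Lemma cancellation_saving_ge0 s : drrp_feasible P s -> 0 <= cancellation_saving s.
Proof.
move=> feas; rewrite /cancellation_saving big_seq.
apply: sumr_ge0 => t; rewrite mem_index_iota => Ht.
by apply: sumr_ge0 => i Hi; apply: cancellation_saving_term_ge0.
Qed.

Lemma cancellation_saving_gt0 s i t : drrp_feasible P s ->
  i \in NSV P :&: NRV P -> (1 <= t <= T P)%N -> 0 < r P i t ->
  0 < yp s i t -> 0 < ym s i t -> 0 < cancellation_saving s.
Proof.
move=> feas Hi Ht r_gt0 yp_gt0 ym_gt0.
apply: (sumr_gt0_seq (j := t)).
- move=> t'; rewrite mem_index_iota => Ht'.
  by apply: sumr_ge0 => i' Hi'; apply: cancellation_saving_term_ge0.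
- by rewrite mem_index_iota; lia.
rewrite (bigD1 i) //=; apply: ltr_pwDl.
  by rewrite mulr_gt0 // ltr0z /transfer_overlap; lia.
by apply: sumr_ge0 => i' /andP [Hi' _]; apply: cancellation_saving_term_ge0.
Qed.

Lemma optimal_cancel_transfers s :
  drrp_optimal P s -> drrp_optimal P (cancel_transfers s).
Proof.
move=> [feas opt]; split; first exact: feasible_cancel_transfers.
move=> s' feas'; apply: le_trans (opt s' feas').
by rewrite [leRHS]cost_cancel_transfers lerDl cancellation_saving_ge0.
Qed.

End CancelTransfers.

Theorem lemma1 (R : realType) (N : finType) (P : drrp_data R N) :
  drrp_wf P ->
  (exists s, drrp_optimal P s) ->
  (exists s, drrp_optimal P s /\
     forall i t, i \in NSV P :&: NRV P -> (1 <= t <= T P)%N ->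
       yp s i t = 0 \/ ym s i t = 0) /\
  ((forall i t, i \in NSV P :&: NRV P -> (1 <= t <= T P)%N -> 0 < r P i t) ->
   forall s, drrp_optimal P s ->
     forall i t, i \in NSV P :&: NRV P -> (1 <= t <= T P)%N ->
       ~ (0 < yp s i t /\ 0 < ym s i t)).
Proof.
move=> [_ _ r_ge0 _ _] [s opt_s]; split.
  exists (cancel_transfers s); split; first exact: optimal_cancel_transfers.
  by move=> i t _ _; apply: cancel_transfers_exclusive.
move=> r_gt0 {opt_s}s [feas opt] i t Hi Ht [yp_gt0 ym_gt0].
have := opt _ (feasible_cancel_transfers feas).
rewrite [leLHS]cost_cancel_transfers gerDl leNgt.
by rewrite (cancellation_saving_gt0 r_ge0 feas Hi Ht) ?r_gt0.
Qed.
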